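(* For an integer $p\ge 2$ let $S(p)=\sum_{k\geq 0}\frac{\left(k+1-\frac{p}{2}\left\lfloor\frac{k}{p}\right\rfloor\right)\left(\left\lfloor\frac{k}{p}\right\rfloor+1\right)}{(k+1)(k+p+1)(k+2)(k+p)}$. Then \[ S(3)=\frac{\pi}{18\sqrt{3}},\qquad S(4)=\frac{\pi}{48},\qquad S(6)=\frac{7\pi}{360\sqrt{3}}, \] \[ S(5)=\frac{\left(\sqrt{5}-1\right)\sqrt{5-\sqrt{5}}+3\left(\sqrt{5}+1\right)\sqrt{5+\sqrt{5}}}{600\sqrt{10}}\,\pi . \]
   Context: $\lfloor\cdot\rfloor$ denotes the floor function. *)

From Stdlib Require Import Reals Lra Lia Arith.
Open Scope R_scope.

Definition S_term (p : nat) (k : nat) : R :=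
  let q := INR (Nat.div k p) in
  let kk := INR k in
  let pp := INR p in
  ((kk + 1 - (pp / 2) * q) * (q + 1)) /
  ((kk + 1) * (kk + pp + 1) * (kk + 2) * (kk + pp)).

From Coquelicot Require Import Coquelicot.
From Stdlib Require Import Reals Lra Lia Psatz.
Open Scope R_scope.

(* Fix p >= 3 and write k = p q + r with q = floor(k/p), r = k mod p.  Then
   S_term p k = (k + r + 2)(k - r + p) / (2p (k+1)(k+2)(k+p)(k+p+1)), a
   rational function of k whose partial fractions
       c1/(k+1) + c2/(k+2) + cp/(k+p) + cp1/(k+p+1)
   have coefficients depending only on r.  As 1/(k+j) = ∫_0^1 x^(k+j-1) dx,
   S_term p k = ∫_0^1 kernel p k, and kernel p (p M + r) = x^(pM) kernel p r.
   So if the first p kernels add up to (1 - x^p) H(x), the first pM terms add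
   up to ∫_0^1 (1 - x^(pM)) H, which differs from ∫_0^1 H by at most
   sup|H| / (pM + 1); as the terms are nonnegative the whole series converges
   to ∫_0^1 H.  For each p, H is a polynomial plus multiples of
   1/(x^2 + 2 cos θ x + 1) (the cyclotomic factors of 1 - x^p), whose integral
   over [0,1] is θ / (2 sin θ); the trigonometric values at multiples of π/p
   then give the closed forms. *)

(* Partial sums with an exclusive upper bound: psum f n = f 0 + ... + f (n-1).
   They split cleanly into blocks of length p. *)
Fixpoint psum (f : nat -> R) (n : nat) : R :=
  match n with O => 0 | S m => psum f m + f m end.

Lemma sum_f_R0_psum (f : nat -> R) (n : nat) : sum_f_R0 f n = psum f (S n).
Proof. induction n as [|n IH]; simpl; [ring | rewrite IH; simpl; ring]. Qed.

Lemma psum_add (f : nat -> R) (m n : nat) :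
  psum f (m + n) = psum f m + psum (fun r => f (m + r)%nat) n.
Proof.
  induction n as [|n IH]; simpl.
  - rewrite Nat.add_0_r; ring.
  - rewrite Nat.add_succ_r; simpl; rewrite IH; ring.
Qed.

Lemma psum_ext (f g : nat -> R) (n : nat) :
  (forall r, (r < n)%nat -> f r = g r) -> psum f n = psum g n.
Proof.
  induction n as [|n IH]; intro H; simpl; auto.
  rewrite IH by (intros; apply H; lia). rewrite H by lia. reflexivity.
Qed.

Lemma psum_scal (c : R) (f : nat -> R) (n : nat) :
  psum (fun r => c * f r) n = c * psum f n.
Proof. induction n as [|n IH]; simpl; [ring | rewrite IH; ring]. Qed.

Lemma psum_mono (f : nat -> R) (n m : nat) :
  (forall k, 0 <= f k) -> (n <= m)%nat -> psum f n <= psum f m.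
Proof.
  intros Hf Hnm. induction Hnm as [|m _ IH]; simpl; [lra | specialize (Hf m); lra].
Qed.

Lemma is_RInt_add (f g : R -> R) (a b A B : R) :
  is_RInt f a b A -> is_RInt g a b B -> is_RInt (fun x => f x + g x) a b (A + B).
Proof. intros; apply (is_RInt_plus f g); auto. Qed.

Lemma is_RInt_cmul (f : R -> R) (a b c A : R) :
  is_RInt f a b A -> is_RInt (fun x => c * f x) a b (c * A).
Proof. intros; apply (is_RInt_scal f); auto. Qed.

(* ∫_0^1 c x^n dx = c / (n + 1), with the denominator in any equal form. *)
Lemma is_RInt_monomial (c : R) (n : nat) (D : R) :
  D = INR n + 1 -> is_RInt (fun x => c * x ^ n) 0 1 (c / D).
Proof.
  intros ->. apply is_RInt_cmul.
  replace (/ (INR n + 1)) with (1 ^ S n / INR (S n) - 0 ^ S n / INR (S n))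
    by (rewrite pow1, pow_i, S_INR by lia; field; pose proof (pos_INR n); lra).
  apply is_RInt_pow.
Qed.

(* x^2 + 2 cos θ x + 1 = (x + cos θ)^2 + sin^2 θ has no real root unless sin θ = 0. *)
Lemma quad_pos (th x : R) : sin th <> 0 -> 0 < x ^ 2 + 2 * cos th * x + 1.
Proof.
  intro Hs. pose proof (sin2_cos2 th) as Hsc. unfold Rsqr in Hsc.
  pose proof (pow2_ge_0 (x + cos th)).
  assert (0 < sin th * sin th) by (apply Rsqr_pos_lt; exact Hs). nra.
Qed.

Lemma quad_primitive (th x : R) : 0 < sin th ->
  is_derive (fun x => / sin th * atan ((x + cos th) / sin th)) x
            (/ (x ^ 2 + 2 * cos th * x + 1)).
Proof.
  intro Hs. pose proof (quad_pos th x ltac:(lra)) as Hq.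
  pose proof (sin2_cos2 th) as Hsc. unfold Rsqr in Hsc.
  set (s := sin th) in *; set (c := cos th) in *.
  assert (Hin : is_derive (fun x => (x + c) / s) x (/ s))
    by (auto_derive; [lra | field; lra]).
  pose proof (is_derive_comp atan (fun x => (x + c) / s) x _ _
    (proj2 (is_derive_Reals _ _ _) (derivable_pt_lim_atan ((x + c) / s))) Hin) as Hd.
  pose proof (is_derive_scal _ x (/ s) _ Hd) as Hd2. simpl in Hd2.
  replace (/ (x ^ 2 + 2 * c * x + 1))
    with (/ s * scal (/ s) (/ (1 + ((x + c) / s) ^ 2))); [exact Hd2|].
  unfold scal; simpl; unfold mult; simpl.
  assert (0 < 1 + ((x + c) / s) ^ 2) by (pose proof (pow2_ge_0 ((x + c) / s)); lra).
  field_simplify_eq; [nra | repeat split; nra].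
Qed.

Lemma is_RInt_quad (th : R) : 0 < th < PI ->
  is_RInt (fun x => / (x ^ 2 + 2 * cos th * x + 1)) 0 1 (th / (2 * sin th)).
Proof.
  intros [H0 H1].
  assert (Hs : 0 < sin th) by (apply sin_gt_0; lra).
  set (F := fun x => / sin th * atan ((x + cos th) / sin th)).
  assert (Hcont : forall x, continuous (fun x => / (x ^ 2 + 2 * cos th * x + 1)) x).
  { intro x. apply (ex_derive_continuous (V := R_NormedModule)).
    pose proof (quad_pos th x ltac:(lra)). auto_derive. lra. }
  pose proof (is_RInt_derive F _ 0 1 (fun x _ => quad_primitive th x Hs)
                (fun x _ => Hcont x)) as HI.
  replace (th / (2 * sin th)) with (minus (F 1) (F 0)); [exact HI|].
  unfold minus, plus, opp, F; simpl.
  set (h := th / 2).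
  assert (Hh : th = 2 * h) by (unfold h; lra).
  assert (Hsh : 0 < sin h) by (apply sin_gt_0; unfold h; lra).
  assert (Hch : 0 < cos h) by (apply cos_gt_0; unfold h; lra).
  assert (E1 : (1 + cos th) / sin th = tan (PI / 2 - h)).
  { unfold tan. rewrite sin_shift, cos_shift, Hh, cos_2a_cos, sin_2a. field. lra. }
  assert (E0 : (0 + cos th) / sin th = tan (PI / 2 - th)).
  { unfold tan. rewrite sin_shift, cos_shift. field. lra. }
  rewrite E1, E0, !atan_tan by (split; unfold h; lra).
  unfold h. field. lra.
Qed.

(* With P = p and r = k mod p, 2P · (numerator of
   S_term p k) equals numer P r k, and the coefficient of 1/(k+j) is
   numer P r (-j) divided by 2P times the product of the other pole gaps. *)
Definition numer (P r y : R) : R := (y + r + 2) * (y - r + P).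
Definition coef1 (P r : R) : R := numer P r (-1) / (2 * P * ((P - 1) * P)).
Definition coef2 (P r : R) : R := - numer P r (-2) / (2 * P * ((P - 2) * (P - 1))).
Definition coefP (P r : R) : R := numer P r (-P) / (2 * P * ((P - 1) * (P - 2))).
Definition coefP1 (P r : R) : R := - numer P r (-P - 1) / (2 * P * (P * (P - 1))).

Lemma INR_div_mod (p k : nat) : (0 < p)%nat ->
  INR k = INR p * INR (k / p) + INR (k mod p).
Proof.
  intro Hp. rewrite <- mult_INR, <- plus_INR. f_equal. apply Nat.div_mod. lia.
Qed.

Lemma INR_ge_3 (p : nat) : (3 <= p)%nat -> 3 <= INR p.
Proof. intro Hp. replace 3 with (INR 3) by (simpl; ring). apply le_INR; exact Hp. Qed.

Lemma S_term_partial_fractions (p k : nat) : (3 <= p)%nat ->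
  let P := INR p in let r := INR (k mod p) in
  S_term p k = coef1 P r / (INR k + 1) + coef2 P r / (INR k + 2)
             + coefP P r / (INR k + P) + coefP1 P r / (INR k + P + 1).
Proof.
  intros Hp P r; subst P r.
  pose proof (INR_div_mod p k ltac:(lia)) as Hk. pose proof (INR_ge_3 p Hp).
  pose proof (pos_INR k). pose proof (pos_INR (k / p)). pose proof (pos_INR (k mod p)).
  unfold S_term, coef1, coef2, coefP, coefP1, numer. cbv zeta.
  set (P := INR p) in *. set (q := INR (k / p)) in *. set (r := INR (k mod p)) in *.
  rewrite Hk. field. repeat split; nra.
Qed.

(* Integrand representing S_term p k: each 1/(k+j) becomes x^(k+j-1). *)
Definition kernel (p k : nat) (x : R) : R :=
  let P := INR p in let r := INR (k mod p) in
  coef1 P r * x ^ k + coef2 P r * x ^ (k + 1)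
  + coefP P r * x ^ (k + p - 1) + coefP1 P r * x ^ (k + p).

Lemma is_RInt_kernel (p k : nat) : (3 <= p)%nat ->
  is_RInt (kernel p k) 0 1 (S_term p k).
Proof.
  intro Hp. rewrite S_term_partial_fractions by exact Hp. unfold kernel.
  apply is_RInt_add; [apply is_RInt_add; [apply is_RInt_add|]|];
    apply is_RInt_monomial; rewrite ?minus_INR, ?plus_INR by lia; simpl; ring.
Qed.

Lemma is_RInt_value (f : R -> R) (a b A B : R) :
  is_RInt f a b A -> A = B -> is_RInt f a b B.
Proof. intros H <-; exact H. Qed.

Lemma is_RInt_psum_kernel (p n : nat) : (3 <= p)%nat ->
  is_RInt (fun x => psum (fun k => kernel p k x) n) 0 1 (psum (S_term p) n).
Proof.
  intro Hp. induction n as [|n IH]; simpl.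
  - apply (is_RInt_ext (fun x => 0 * x ^ 0)); [intros x _; change (0 * x ^ 0 = 0); ring|].
    eapply is_RInt_value; [apply is_RInt_monomial; reflexivity | simpl; field].
  - apply is_RInt_add; [exact IH | apply is_RInt_kernel; exact Hp].
Qed.

Lemma kernel_shift (p M r : nat) (x : R) : (r < p)%nat ->
  kernel p (p * M + r) x = x ^ (p * M) * kernel p r x.
Proof.
  intro Hr. unfold kernel.
  replace ((p * M + r) mod p)%nat with (r mod p)
    by (rewrite Nat.add_comm, Nat.mul_comm, Nat.Div0.mod_add; reflexivity).
  replace (p * M + r + 1)%nat with (p * M + (r + 1))%nat by lia.
  replace (p * M + r + p - 1)%nat with (p * M + (r + p - 1))%nat by lia.
  replace (p * M + r + p)%nat with (p * M + (r + p))%nat by lia.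
  rewrite !pow_add. ring.
Qed.

(* If one block of p kernels sums to (1 - x^p) h, then M blocks sum to
   (1 - x^(pM)) h (a geometric sum over the blocks). *)
Lemma psum_kernel_blocks (p : nat) (x h : R) :
  psum (fun r => kernel p r x) p = (1 - x ^ p) * h ->
  forall M, psum (fun k => kernel p k x) (p * M) = (1 - x ^ (p * M)) * h.
Proof.
  intros Hblock M. induction M as [|M IH].
  - rewrite Nat.mul_0_r. simpl. ring.
  - replace (p * S M)%nat with (p * M + p)%nat by lia.
    rewrite psum_add, IH,
      (psum_ext _ (fun r => x ^ (p * M) * kernel p r x)) by (intros; apply kernel_shift; lia).
    rewrite psum_scal, Hblock, pow_add. ring.
Qed.

(* For p >= 3 every term is nonnegative: k + 1 >= (p/2) floor(k/p). *)
Lemma S_term_nonneg (p k : nat) : (3 <= p)%nat -> 0 <= S_term p k.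
Proof.
  intro Hp. unfold S_term. cbv zeta.
  pose proof (INR_div_mod p k ltac:(lia)) as Hk. pose proof (INR_ge_3 p Hp).
  pose proof (pos_INR k). pose proof (pos_INR (k / p)). pose proof (pos_INR (k mod p)).
  set (P := INR p) in *. set (q := INR (k / p)) in *.
  apply Rmult_le_pos.
  - apply Rmult_le_pos; nra.
  - left. apply Rinv_0_lt_compat. repeat apply Rmult_lt_0_compat; lra.
Qed.

Lemma moment_bound (h : R -> R) (C J : R) (n : nat) :
  is_RInt (fun x => h x * x ^ n) 0 1 J ->
  (forall x, 0 <= x <= 1 -> Rabs (h x) <= C) ->
  Rabs J <= C / (INR n + 1).
Proof.
  intros HJ Hh.
  assert (Hpow : forall x, 0 <= x <= 1 -> - C * x ^ n <= h x * x ^ n <= C * x ^ n).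
  { intros x Hx. pose proof (pow_le x n ltac:(lra)).
    pose proof (Hh x Hx) as Hb. apply Rabs_le_between in Hb. split; nra. }
  apply Rabs_le. split.
  - replace (- (C / (INR n + 1))) with (- C / (INR n + 1))
      by (field; pose proof (pos_INR n); lra).
    apply (is_RInt_le (fun x => - C * x ^ n) (fun x => h x * x ^ n) 0 1);
      [lra | apply is_RInt_monomial; reflexivity | exact HJ |].
    intros x Hx. apply Hpow. lra.
  - apply (is_RInt_le (fun x => h x * x ^ n) (fun x => C * x ^ n) 0 1);
      [lra | exact HJ | apply is_RInt_monomial; reflexivity |].
    intros x Hx. apply Hpow. lra.
Qed.

Lemma inv_succ_eventually_small (C e : R) : 0 < e ->
  exists N, forall n, (N <= n)%nat -> C / (INR n + 1) < e.
Proof.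
  intro He. destruct (INR_archimed e C He) as [N HN]. exists N. intros n Hn.
  pose proof (le_INR _ _ Hn). pose proof (pos_INR N).
  apply (Rmult_lt_reg_r (INR n + 1)); [lra|].
  unfold Rdiv. rewrite Rmult_assoc, Rinv_l by lra. nra.
Qed.

(* A nondecreasing sequence whose subsequence along multiples of p approaches
   I at rate C/(pM+1) converges to I: it stays below I, and beyond pM it is
   squeezed between A(pM) and I. *)
Lemma nondecreasing_cv_from_multiples (A : nat -> R) (p : nat) (I C : R) :
  (0 < p)%nat ->
  (forall n m, (n <= m)%nat -> A n <= A m) ->
  (forall M, Rabs (I - A (p * M)%nat) <= C / (INR (p * M) + 1)) ->
  Un_cv A I.
Proof.
  intros Hp Hmono Hbound.
  assert (Hsmall : forall e, 0 < e ->
            exists M, forall M', (M <= M')%nat -> C / (INR (p * M') + 1) < e).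
  { intros e He. destruct (inv_succ_eventually_small C e He) as [M HM].
    exists M. intros M' HM'. apply HM. nia. }
  assert (Hbelow : forall n, A n <= I).
  { intro n. destruct (Rle_or_lt (A n) I) as [Hle | Hgt]; [exact Hle|].
    destruct (Hsmall (A n - I) ltac:(lra)) as [M HM].
    specialize (HM (Nat.max M n) (Nat.le_max_l _ _)).
    pose proof (Hbound (Nat.max M n)) as Hb. apply Rabs_le_between in Hb.
    assert (A n <= A (p * Nat.max M n)%nat) by (apply Hmono; nia). lra. }
  intros eps Heps. destruct (Hsmall eps Heps) as [M HM].
  exists (p * M)%nat. intros n Hn. unfold Rdist.
  specialize (HM M (le_n _)).
  pose proof (Hbound M) as Hb. apply Rabs_le_between in Hb.
  pose proof (Hmono _ _ Hn). pose proof (Hbelow n).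
  rewrite Rabs_left1 by lra. lra.
Qed.

Lemma S_sum_from_block (p : nat) (h : R -> R) (I C : R) : (3 <= p)%nat ->
  is_RInt h 0 1 I ->
  (forall x, 0 <= x <= 1 -> Rabs (h x) <= C) ->
  (forall x, psum (fun r => kernel p r x) p = (1 - x ^ p) * h x) ->
  infinite_sum (S_term p) I.
Proof.
  intros Hp Hh HC Hblock.
  assert (Herror : forall M, is_RInt (fun x => h x * x ^ (p * M)) 0 1
                                     (I - psum (S_term p) (p * M))).
  { intro M.
    apply (is_RInt_ext (fun x => h x - psum (fun k => kernel p k x) (p * M))).
    - intros x _. rewrite (psum_kernel_blocks p x (h x) (Hblock x)). simpl. ring.
    - apply (is_RInt_minus h); [exact Hh | apply is_RInt_psum_kernel; exact Hp]. }
  assert (Hcv : Un_cv (psum (S_term p)) I).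
  { apply (nondecreasing_cv_from_multiples _ p I C); [lia | |].
    - intros n m Hnm. apply psum_mono; [intro k; apply S_term_nonneg; exact Hp | exact Hnm].
    - intro M. exact (moment_bound h C _ _ (Herror M) HC). }
  intros eps Heps. destruct (Hcv eps Heps) as [N HN].
  exists N. intros n Hn. rewrite sum_f_R0_psum. apply HN. lia.
Qed.

(* Bounds on [0,1] for the two kinds of summands of the block functions;
   the quadratic factors occurring have cos θ >= -1/2, hence value >= 3/4. *)
Lemma Rabs_monomial_le (a x : R) (n : nat) : 0 <= x <= 1 -> Rabs (a * x ^ n) <= Rabs a.
Proof.
  intro Hx. rewrite Rabs_mult, <- RPow_abs, (Rabs_pos_eq x) by lra.
  pose proof (Rabs_pos a). pose proof (pow_le x n ltac:(lra)).
  assert (x ^ n <= 1) by (rewrite <- (pow1 n); apply pow_incr; lra). nra.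
Qed.

Lemma Rabs_inv_quad_le (g th x : R) : 0 <= x <= 1 -> -1/2 <= cos th ->
  Rabs (g * / (x ^ 2 + 2 * cos th * x + 1)) <= Rabs g * (4/3).
Proof.
  intros Hx Hc. rewrite Rabs_mult.
  assert (Hq : 3/4 <= x ^ 2 + 2 * cos th * x + 1).
  { assert (0 <= (cos th + 1/2) * x) by (apply Rmult_le_pos; lra).
    pose proof (pow2_ge_0 (x - 1/2)). nra. }
  rewrite (Rabs_pos_eq (/ _)) by (left; apply Rinv_0_lt_compat; lra).
  apply Rmult_le_compat_l; [apply Rabs_pos|].
  replace (4/3) with (/ (3/4)) by field. apply Rinv_le_contravar; lra.
Qed.

Ltac bound_terms :=
  match goal with
  | |- Rabs (_ + _) <= _ =>
      eapply Rle_trans; [apply Rabs_triang | apply Rplus_le_compat; bound_terms]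
  | _ => first [apply Rabs_monomial_le; assumption
               | apply Rabs_inv_quad_le; [assumption|]]
  end.

Ltac integrate_terms :=
  match goal with
  | |- is_RInt (fun x => @?f x + @?g x) 0 1 _ => apply is_RInt_add; integrate_terms
  | |- is_RInt (fun x => _ * / (@?f x)) 0 1 _ => apply is_RInt_cmul; apply is_RInt_quad
  | |- is_RInt (fun x => _ * x ^ _) 0 1 _ => apply is_RInt_monomial
  end.

(* p = 3:  the block sum is (1 - x^3) h3, with 1 - x^3 = (1 - x)(x^2 + x + 1). *)
Definition h3 (x : R) : R :=
  (-1/9) * x ^ 0 + (2/9) * x ^ 1 + (1/6) * / (x ^ 2 + 2 * cos (PI/3) * x + 1).

Lemma S3_sum : infinite_sum (S_term 3) (PI / (18 * sqrt 3)).
Proof.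
  assert (HPI := PI_RGT_0).
  assert (Hs3 : 0 < sqrt 3) by (apply sqrt_lt_R0; lra).
  eapply (S_sum_from_block 3 h3 _ _ ltac:(lia)).
  - unfold h3. eapply is_RInt_value; [integrate_terms | ]; try reflexivity; [split; lra|].
    change (INR 0) with 0; change (INR 1) with 1. rewrite sin_PI3. field. lra.
  - intros x Hx. unfold h3. bound_terms. rewrite cos_PI3. lra.
  - intro x. unfold h3, kernel. simpl. rewrite cos_PI3.
    assert (0 < x ^ 2 + 2 * (1/2) * x + 1) by (pose proof (pow2_ge_0 (x + 1/2)); nra).
    unfold coef1, coef2, coefP, coefP1, numer. field. simpl in *. lra.
Qed.

(* p = 4:  1 - x^4 = (1 - x)(1 + x)(x^2 + 1). *)
Definition h4 (x : R) : R :=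
  (-5/96) * x ^ 0 + (1/24) * x ^ 1 + (3/32) * x ^ 2
  + (1/12) * / (x ^ 2 + 2 * cos (PI/2) * x + 1).

Lemma S4_sum : infinite_sum (S_term 4) (PI / 48).
Proof.
  assert (HPI := PI_RGT_0).
  eapply (S_sum_from_block 4 h4 _ _ ltac:(lia)).
  - unfold h4. eapply is_RInt_value; [integrate_terms | ]; try reflexivity; [split; lra|].
    rewrite sin_PI2. simpl. field.
  - intros x Hx. unfold h4. bound_terms. rewrite cos_PI2. lra.
  - intro x. unfold h4, kernel. simpl. rewrite cos_PI2.
    assert (0 < x ^ 2 + 2 * 0 * x + 1) by (pose proof (pow2_ge_0 x); nra).
    unfold coef1, coef2, coefP, coefP1, numer. field. simpl in *. lra.
Qed.

(* p = 6:  1 - x^6 = (1 - x)(1 + x)(x^2 + x + 1)(x^2 - x + 1). *)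
Definition h6 (x : R) : R :=
  (-7/360) * x ^ 0 + (1/180) * x ^ 1 + (1/80) * x ^ 2 + (1/45) * x ^ 3 + (5/144) * x ^ 4
  + (1/40) * / (x ^ 2 + 2 * cos (2 * (PI/3)) * x + 1)
  + (1/120) * / (x ^ 2 + 2 * cos (PI/3) * x + 1).

Lemma S6_sum : infinite_sum (S_term 6) (7 * PI / (360 * sqrt 3)).
Proof.
  assert (HPI := PI_RGT_0).
  assert (Hs3 : 0 < sqrt 3) by (apply sqrt_lt_R0; lra).
  eapply (S_sum_from_block 6 h6 _ _ ltac:(lia)).
  - unfold h6. eapply is_RInt_value; [integrate_terms | ]; try reflexivity; try (split; lra).
    rewrite sin_PI3, sin_2PI3. simpl. field. lra.
  - intros x Hx. unfold h6. bound_terms; rewrite ?cos_PI3, ?cos_2PI3; lra.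
  - intro x. unfold h6, kernel. simpl. rewrite cos_PI3, cos_2PI3.
    assert (0 < x ^ 2 + 2 * (1/2) * x + 1) by (pose proof (pow2_ge_0 (x + 1/2)); nra).
    assert (0 < x ^ 2 + 2 * (-1/2) * x + 1) by (pose proof (pow2_ge_0 (x - 1/2)); nra).
    unfold coef1, coef2, coefP, coefP1, numer. field. simpl in *. lra.
Qed.

(* p = 5:  the trigonometric values at π/5 and 3π/5.  cos(π/5) is the root
   of 4c^2 - 2c - 1 = 0 coming from cos(3π/5) = -cos(2π/5). *)
Lemma cos_PI5 : cos (PI/5) = (1 + sqrt 5) / 4.
Proof.
  assert (HPI := PI_RGT_0).
  assert (Hu : sqrt 5 * sqrt 5 = 5) by (apply sqrt_sqrt; lra).
  pose proof (sqrt_pos 5).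
  set (u := sqrt 5) in *. set (c := cos (PI/5)). set (s := sin (PI/5)).
  assert (Hc : 0 < c) by (apply cos_gt_0; lra).
  assert (Hss : s * s = 1 - c * c)
    by (pose proof (sin2 (PI/5)) as E; unfold Rsqr in E; fold s c in E; lra).
  assert (H3 : cos (3 * (PI/5)) = - cos (2 * (PI/5))).
  { rewrite <- Rtrigo_facts.cos_pi_minus. f_equal. field. }
  replace (3 * (PI/5)) with (2 * (PI/5) + PI/5) in H3 by ring.
  rewrite cos_plus, sin_2a, cos_2a_cos in H3. fold c s in H3.
  assert (Hq : (c + 1) * (4 * c * c - 2 * c - 1) = 0) by nra.
  apply Rmult_integral in Hq as [Hq | Hq]; [lra|].
  assert (Hz : (4 * c - 1 - u) * (4 * c - 1 + u) = 0) by nra.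
  apply Rmult_integral in Hz as [Hz | Hz]; nra.
Qed.

Lemma cos_3PI5 : cos (3 * (PI/5)) = (1 - sqrt 5) / 4.
Proof.
  assert (Hu : sqrt 5 * sqrt 5 = 5) by (apply sqrt_sqrt; lra).
  replace (3 * (PI/5)) with (PI - 2 * (PI/5)) by field.
  rewrite Rtrigo_facts.cos_pi_minus, cos_2a_cos, cos_PI5. nra.
Qed.

Lemma sin_eq_pos_root (th s : R) : 0 < th < PI -> 0 <= s ->
  s * s = 1 - cos th * cos th -> sin th = s.
Proof.
  intros Hth Hs Hss. apply Rsqr_inj; [left; apply sin_gt_0; lra | exact Hs |].
  pose proof (sin2 th) as E. unfold Rsqr in *. lra.
Qed.

(* sin(π/5) = √(10 - 2√5)/4 and sin(3π/5) = √(10 + 2√5)/4, written with the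
   radicals of the final formula. *)
Lemma sin_PI5 : sin (PI/5) = sqrt (5 - sqrt 5) * sqrt 10 / (4 * sqrt 5).
Proof.
  assert (HPI := PI_RGT_0).
  assert (Hu : sqrt 5 * sqrt 5 = 5) by (apply sqrt_sqrt; lra).
  assert (Hu2 : 2 < sqrt 5) by (pose proof (sqrt_pos 5); nra).
  assert (Hv : sqrt (5 - sqrt 5) * sqrt (5 - sqrt 5) = 5 - sqrt 5) by (apply sqrt_sqrt; nra).
  assert (Ht : sqrt 10 * sqrt 10 = 10) by (apply sqrt_sqrt; lra).
  pose proof (sqrt_pos (5 - sqrt 5)). pose proof (sqrt_pos 10).
  apply sin_eq_pos_root; [lra | apply Rdiv_le_0_compat; nra |].
  rewrite cos_PI5.
  transitivity ((sqrt (5 - sqrt 5) * sqrt (5 - sqrt 5)) * (sqrt 10 * sqrt 10)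
                / (16 * (sqrt 5 * sqrt 5))); [field; lra|].
  rewrite Hv, Ht, Hu. nra.
Qed.

Lemma sin_3PI5 : sin (3 * (PI/5)) = sqrt (5 + sqrt 5) * sqrt 10 / (4 * sqrt 5).
Proof.
  assert (HPI := PI_RGT_0).
  assert (Hu : sqrt 5 * sqrt 5 = 5) by (apply sqrt_sqrt; lra).
  assert (Hu2 : 2 < sqrt 5) by (pose proof (sqrt_pos 5); nra).
  assert (Hw : sqrt (5 + sqrt 5) * sqrt (5 + sqrt 5) = 5 + sqrt 5) by (apply sqrt_sqrt; nra).
  assert (Ht : sqrt 10 * sqrt 10 = 10) by (apply sqrt_sqrt; lra).
  pose proof (sqrt_pos (5 + sqrt 5)). pose proof (sqrt_pos 10).
  apply sin_eq_pos_root; [lra | apply Rdiv_le_0_compat; nra |].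
  rewrite cos_3PI5.
  transitivity ((sqrt (5 + sqrt 5) * sqrt (5 + sqrt 5)) * (sqrt 10 * sqrt 10)
                / (16 * (sqrt 5 * sqrt 5))); [field; lra|].
  rewrite Hw, Ht, Hu. nra.
Qed.

(* 1 - x^5 = (1 - x) q1 q3 with q1, q3 the quadratics of angles π/5, 3π/5. *)
Definition h5 (x : R) : R :=
  (-3/100) * x ^ 0 + (1/75) * x ^ 1 + (3/100) * x ^ 2 + (4/75) * x ^ 3
  + ((3 - sqrt 5) / 120) * / (x ^ 2 + 2 * cos (PI/5) * x + 1)
  + ((3 + sqrt 5) / 120) * / (x ^ 2 + 2 * cos (3 * (PI/5)) * x + 1).

Lemma h5_quadratic_part (x : R) :
  (1 - x ^ 5) * (((3 - sqrt 5) / 120) * / (x ^ 2 + 2 * cos (PI/5) * x + 1)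
                 + ((3 + sqrt 5) / 120) * / (x ^ 2 + 2 * cos (3 * (PI/5)) * x + 1))
  = (1 - x) * (3 + 4 * x + 3 * x ^ 2) / 60.
Proof.
  assert (Hu : sqrt 5 * sqrt 5 = 5) by (apply sqrt_sqrt; lra).
  assert (Hu2 : 2 < sqrt 5) by (pose proof (sqrt_pos 5); nra).
  rewrite cos_PI5, cos_3PI5. set (u := sqrt 5) in *.
  set (q1 := x ^ 2 + 2 * ((1 + u) / 4) * x + 1).
  set (q3 := x ^ 2 + 2 * ((1 - u) / 4) * x + 1).
  assert (P1 : 0 < q1) by (unfold q1; pose proof (pow2_ge_0 (x + (1 + u) / 4)); nra).
  assert (P3 : 0 < q3) by (unfold q3; pose proof (pow2_ge_0 (x + (1 - u) / 4)); nra).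
  assert (F : 1 - x ^ 5 = (1 - x) * q1 * q3).
  { transitivity ((1 - x) * q1 * q3 + (1 - x) * (u * u - 5) * x ^ 2 / 4);
      [unfold q1, q3; field | rewrite Hu; field]. }
  rewrite F.
  transitivity ((1 - x) * (((3 - u) / 120) * q3 + ((3 + u) / 120) * q1)); [field; lra|].
  transitivity ((1 - x) * ((3 + 4 * x + 3 * x ^ 2) / 60 + (u * u - 5) * x / 120));
    [unfold q1, q3; field | rewrite Hu; field].
Qed.

(* The value of ∫_0^1 h5 (its polynomial part integrates to 0). *)
Lemma S5_closed_form :
  ((3 - sqrt 5) / 120) * ((PI/5) / (2 * sin (PI/5)))
  + ((3 + sqrt 5) / 120) * (3 * (PI/5) / (2 * sin (3 * (PI/5))))
  = ((sqrt 5 - 1) * sqrt (5 - sqrt 5) + 3 * (sqrt 5 + 1) * sqrt (5 + sqrt 5))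
      / (600 * sqrt 10) * PI.
Proof.
  assert (Hu : sqrt 5 * sqrt 5 = 5) by (apply sqrt_sqrt; lra).
  assert (Hu2 : 2 < sqrt 5) by (pose proof (sqrt_pos 5); nra).
  rewrite sin_PI5, sin_3PI5.
  set (u := sqrt 5) in *. set (v := sqrt (5 - u)). set (w := sqrt (5 + u)).
  assert (Hv : v * v = 5 - u) by (apply sqrt_sqrt; nra).
  assert (Hw : w * w = 5 + u) by (apply sqrt_sqrt; lra).
  assert (Hv0 : 0 < v) by (apply sqrt_lt_R0; nra).
  assert (Hw0 : 0 < w) by (apply sqrt_lt_R0; lra).
  assert (Ht0 : 0 < sqrt 10) by (apply sqrt_lt_R0; lra).
  assert (L1 : (3 - u) * u / v = (u - 1) * v / 2).
  { apply (Rmult_eq_reg_r (2 * v)); [| lra].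
    transitivity (2 * (3 - u) * u); [field; lra|].
    transitivity ((u - 1) * (v * v)); [| field]. rewrite Hv. nra. }
  assert (L2 : (3 + u) * u / w = (u + 1) * w / 2).
  { apply (Rmult_eq_reg_r (2 * w)); [| lra].
    transitivity (2 * (3 + u) * u); [field; lra|].
    transitivity ((u + 1) * (w * w)); [| field]. rewrite Hw. nra. }
  transitivity (PI / (300 * sqrt 10) * ((3 - u) * u / v)
                + 3 * (PI / (300 * sqrt 10)) * ((3 + u) * u / w)).
  { field. repeat split; lra. }
  rewrite L1, L2. field. lra.
Qed.

Lemma S5_sum : infinite_sum (S_term 5)
    (((sqrt 5 - 1) * sqrt (5 - sqrt 5) + 3 * (sqrt 5 + 1) * sqrt (5 + sqrt 5))
       / (600 * sqrt 10) * PI).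
Proof.
  assert (HPI := PI_RGT_0).
  assert (Hu : sqrt 5 * sqrt 5 = 5) by (apply sqrt_sqrt; lra).
  assert (Hu2 : 2 < sqrt 5) by (pose proof (sqrt_pos 5); nra).
  eapply (S_sum_from_block 5 h5 _ _ ltac:(lia)).
  - unfold h5. eapply is_RInt_value; [integrate_terms | ]; try reflexivity; try (split; lra).
    rewrite <- S5_closed_form. simpl. lra.
  - intros x Hx. unfold h5. bound_terms; rewrite ?cos_PI5, ?cos_3PI5; nra.
  - intro x.
    transitivity ((1 - x ^ 5) * ((-3/100) * x ^ 0 + (1/75) * x ^ 1 + (3/100) * x ^ 2
                                 + (4/75) * x ^ 3)
                  + (1 - x) * (3 + 4 * x + 3 * x ^ 2) / 60).
    + unfold kernel. simpl. unfold coef1, coef2, coefP, coefP1, numer. field.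
    + rewrite <- h5_quadratic_part. unfold h5. ring.
Qed.

Theorem mainTheorem9 :
  infinite_sum (S_term 3) (PI / (18 * sqrt 3)) /\
  infinite_sum (S_term 4) (PI / 48) /\
  infinite_sum (S_term 6) (7 * PI / (360 * sqrt 3)) /\
  infinite_sum (S_term 5)
    (((sqrt 5 - 1) * sqrt (5 - sqrt 5) + 3 * (sqrt 5 + 1) * sqrt (5 + sqrt 5))
       / (600 * sqrt 10) * PI).
Proof.
  split; [exact S3_sum |].
  split; [exact S4_sum |].
  split; [exact S6_sum | exact S5_sum].
Qed.
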